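(* Let $\mathcal Z$ be an instance space, $\mathcal W$ a hypothesis space and $\ell:\mathcal W\times\mathcal Z\to\mathbb R^+$ a non-negative loss. Let $\mu,\mu'$ be probability distributions on $\mathcal Z$ with $\mu\ll\mu'$. Let $S=\{Z_1,\dots,Z_n\}$ be drawn IID from $\mu$, and let $W$ be the output of any learning algorithm described by a conditional distribution $P_{W|S}$ (not necessarily empirical risk minimization), with marginal $P_W$. Let $L_{\mu'}(w)=\mathbb E_{Z\sim\mu'}[\ell(w,Z)]$ and $\hat L(w,S)=\frac1n\sum_{i=1}^n\ell(w,Z_i)$. Assume there are $b_-<0<b_+$ and a function $\psi$ such that under $(W,Z)\sim P_W\otimes\mu'$, $\log\mathbb E[e^{\lambda(\ell(W,Z)-\mathbb E[\ell(W,Z)])}]\le\psi(\lambda)$ for all $\lambda\in(b_-,b_+)$. With $\psi^{*-1}_{-}(x)=\inf_{\lambda\in[0,-b_-)}\frac{x+\psi(-\lambda)}{\lambda}$ and $\psi^{*-1}_{+}(x)=\inf_{\lambda\in[0,b_+)}\frac{x+\psi(\lambda)}{\lambda}$, we have $$\mathbb E_{WS}[L_{\mu'}(W)-\hat L(W,S)]\le\frac1n\sum_{i=1}^n\psi^{*-1}_{-}\big(I(W;Z_i)+D(\mu\|\mu')\big),$$ $$-\mathbb E_{WS}[L_{\mu'}(W)-\hat L(W,S)]\le\frac1n\sum_{i=1}^n\psi^{*-1}_{+}\big(I(W;Z_i)+D(\mu\|\mu')\big).$$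
   Context: $I(\cdot;\cdot)$ is mutual information under the joint distribution of $(W,S)$ given by $P_{W|S}$ and $\mu^{\otimes n}$; $D(\mu\|\mu')$ is the Kullback–Leibler divergence. *)

From HB Require Import structures.
From mathcomp Require Import all_boot all_order all_algebra.
From mathcomp Require Import all_classical all_reals all_analysis.

Set Implicit Arguments.
Unset Strict Implicit.
Unset Printing Implicit Defensive.

Import Order.TTheory GRing.Theory Num.Theory.
Local Open Scope classical_set_scope.
Local Open Scope ring_scope.

Section pairRV.
Context d d1 d2 (T : measurableType d) (T1 : measurableType d1)
  (T2 : measurableType d2).
Variables (X : {mfun T >-> T1}) (Y : {mfun T >-> T2}).

Definition pairRV : T -> (T1 * T2)%type := fun w => (X w, Y w).

Lemma measurable_pairRV : measurable_fun [set: T] pairRV.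
Proof. exact: measurable_fun_pair. Qed.

HB.instance Definition _ := isMeasurableFun.Build _ _ _ _ pairRV measurable_pairRV.
End pairRV.

Section information.
Local Open Scope ereal_scope.
Context {R : realType}.

Definition KL d (T : measurableType d) (P Q : probability T R) : \bar R :=
  if asbool (P `<< Q) then
    \int[P]_x (ln (fine (Radon_Nikodym (charge_of_finite_measure P) Q x)))%:E
  else +oo.

Definition mutual_info d d1 d2 (T : measurableType d) (T1 : measurableType d1)
  (T2 : measurableType d2) (P : probability T R)
  (X : {mfun T >-> T1}) (Y : {mfun T >-> T2}) : \bar R :=
  KL (distribution P (pairRV X Y)) (distribution P X \x distribution P Y).

Definition mutually_independent d d' (T : measurableType d)
  (T' : measurableType d') (P : probability T R) n
  (X : 'I_n -> {mfun T >-> T'}) : Prop :=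
  forall A : 'I_n -> set T', (forall i, measurable (A i)) ->
    P (\bigcap_(i in [set: 'I_n]) (X i @^-1` A i)) =
    \prod_(i < n) P (X i @^-1` A i).

Definition psi_star_inv_plus (psi : R -> R) (bp : R) (x : \bar R) : \bar R :=
  ereal_inf [set (x + (psi lam)%:E) * (lam^-1)%:E | lam in [set lam | (0 < lam < bp)%R]].

Definition psi_star_inv_minus (psi : R -> R) (bm : R) (x : \bar R) : \bar R :=
  ereal_inf [set (x + (psi (- lam))%:E) * (lam^-1)%:E | lam in [set lam | (0 < lam < - bm)%R]].

End information.

From HB Require Import structures.
From mathcomp Require Import all_boot all_order all_algebra.
From mathcomp Require Import all_classical all_reals all_analysis.
From mathcomp Require Import measurable_realfun ring lra.
Import Order.TTheory GRing.Theory Num.Theory.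
Local Open Scope classical_set_scope.
Local Open Scope ring_scope.

(* Fix a sample index i and let P_i be the joint law of (W, Z_i).  The
   Donsker-Varadhan inequality E_P[h] <= D(P || Q) + ln E_Q[exp h] follows by
   integrating Young's inequality u <= exp u / c - 1 + ln c at
   u = h - ln (dP/dQ) and optimising in c.  Apply it to P_i against
   P_W (x) P_{Z_i} = P_W (x) mu; since mu << mu', the reference measure can be
   replaced by P_W (x) mu' at the price of ln (dmu/dmu')(z), whose P_i-mean is
   D(mu || mu').  With h = lam (loss - m) and m = E_{P_W (x) mu'}[loss] =
   E[L_mu'(W)], this gives
     lam (E[loss(W, Z_i)] - m) <= I(W; Z_i) + D(mu || mu') + psi(lam)
   for every lam in (b-, b+).  Dividing by |lam| and taking the infimum gives
   the per-sample bounds, which average to the bounds on the expected gap.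
   When E[loss(W, Z_i)] is infinite, the case lam > 0 forces I(W; Z_i) = +oo,
   so both right-hand sides are +oo. *)

Definition RN_density d (T : measurableType d) (R : realType)
    (P : {finite_measure set T -> \bar R})
    (Q : {sigma_finite_measure set T -> \bar R}) (x : T) : R :=
  fine (Radon_Nikodym (charge_of_finite_measure P) Q x).
Arguments RN_density {d T R}.

Section RN_density.
Local Open Scope ereal_scope.
Context {d} {T : measurableType d} {R : realType}.
Context {P : {finite_measure set T -> \bar R}}
  {Q : {sigma_finite_measure set T -> \bar R}}.
Hypothesis PQ : P `<< Q.
Local Notation dPdQ := (RN_density P Q).

Lemma RN_densityE x : (dPdQ x)%:E = Radon_Nikodym (charge_of_finite_measure P) Q x.
Proof. by rewrite fineK // Radon_Nikodym_fin_num. Qed.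

Lemma measurable_RN_density : measurable_fun setT dPdQ.
Proof.
change (measurable_fun setT (fine \o Radon_Nikodym (charge_of_finite_measure P) Q)).
apply: (measurableT_comp (fine_measurable measurableT)).
apply: measurable_int; exact: (Radon_Nikodym_integrable (nu := charge_of_finite_measure P)).
Qed.

Lemma measurable_RN_density_le0 : measurable [set x | dPdQ x <= 0]%R.
Proof.
rewrite -[X in measurable X]setTI -[X in _ `&` X]/(dPdQ @^-1` `]-oo, 0%R]).
exact: measurable_RN_density.
Qed.

Lemma RN_density_le0_null : P [set x | dPdQ x <= 0]%R = 0.
Proof.
have mN := measurable_RN_density_le0.
apply/eqP; rewrite eq_le measure_ge0 andbT.
rewrite -[P _]/(charge_of_finite_measure P _) (Radon_Nikodym_integral (mu := Q)) //.
rewrite -(integral0 Q [set x | dPdQ x <= 0]%R).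
apply: le_integral => //.
- apply: (integrableS measurableT) => //.
  exact: (Radon_Nikodym_integrable (nu := charge_of_finite_measure P)).
- exact: integrable0.
- by move=> x; rewrite inE /= -RN_densityE lee_fin.
Qed.

Lemma ge0_integral_RN_density (g : T -> \bar R) E : measurable E ->
  measurable_fun E g -> (forall x, 0 <= g x) ->
  \int[P]_(x in E) g x = \int[Q]_(x in E) (g x * (dPdQ x)%:E).
Proof.
move=> mE mg g0.
rewrite -(Radon_Nikodym_SigmaFinite.change_of_variables PQ g0 mE mg).
apply: ae_eq_integral => //.
- apply: emeasurable_funM => //; apply: measurable_funTS.
  exact: measurable_int (Radon_Nikodym_SigmaFinite.f_integrable PQ).
- apply: emeasurable_funM => //; apply/measurable_EFinP/measurable_funTS.
  exact: measurable_RN_density.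
- apply: ae_eqe_mul2l; under [X in ae_eq _ _ _ X]eq_fun do rewrite RN_densityE.
  exact: ae_eq_Radon_Nikodym_SigmaFinite.
Qed.

Lemma integral_expR_sub_ln_RN_density (g : T -> R) : measurable_fun setT g ->
  \int[P]_x (expR (g x - ln (dPdQ x)))%:E <= \int[Q]_x (expR (g x))%:E.
Proof.
move=> mg; set N := [set x | dPdQ x <= 0]%R.
have mN : measurable N := measurable_RN_density_le0.
have mge : measurable_fun setT (fun x => (expR (g x))%:E).
  by apply/measurable_EFinP; exact: measurableT_comp.
have mgf : measurable_fun setT (fun x => (expR (g x - ln (dPdQ x)))%:E).
  apply/measurable_EFinP; apply: measurableT_comp => //.
  apply: measurable_funB => //; exact: measurableT_comp measurable_RN_density.
rewrite (ge0_negligible_integral mN measurableT mgf (fun x _ => expR_ge0 _)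
  RN_density_le0_null).
rewrite (ge0_integral_RN_density _ _ (measurableD measurableT mN) (measurable_funTS mgf));
  last by move=> x; rewrite lee_fin expR_ge0.
rewrite (eq_integral (fun x => (expR (g x))%:E)); last first.
  move=> x; rewrite inE => -[_ /negP]; rewrite -ltNge => fx.
  by rewrite -EFinM expRB lnK ?posrE // divfK // gt_eqF.
apply: ge0_subset_integral => //; first exact: measurableD.
Qed.

End RN_density.

Section KL_divergence.
Local Open Scope ereal_scope.
Context {d} {T : measurableType d} {R : realType} {P Q : probability T R}.

Lemma KL_abs_continuous : KL P Q != +oo -> P `<< Q.
Proof. by rewrite /KL; case: (asboolP (P `<< Q)). Qed.

Lemma KLE : P `<< Q -> KL P Q = \int[P]_x (ln (RN_density P Q x))%:E.
Proof. by move=> PQ; rewrite /KL asboolT. Qed.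

Lemma KL_neqNy : KL P Q != -oo.
Proof.
have [PQ|] := pselect (P `<< Q); last by move=> nPQ; rewrite /KL asboolF.
rewrite KLE //; set L := fun x => (ln (RN_density P Q x))%:E.
have mL : measurable_fun setT L.
  apply/measurable_EFinP; exact: measurableT_comp (measurable_RN_density PQ).
have expNL : \int[P]_x (expR (0 - ln (RN_density P Q x)))%:E <= 1.
  have := integral_expR_sub_ln_RN_density PQ (cst 0%R) (measurable_cst _).
  rewrite /cst expR0 integral_cst // mul1e => /le_trans; apply.
  exact: probability_le1.
have neg_fin : \int[P]_x L^\- x \is a fin_num.
  rewrite ge0_fin_numE; last exact: integral_ge0.
  apply: le_lt_trans (le_trans _ expNL) (ltry 1%R).
  apply: ge0_le_integral => //.
  - exact: measurable_funeneg.
  - apply/measurable_EFinP; apply: measurableT_comp => //.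
    apply: measurable_funB => //; exact: measurableT_comp (measurable_RN_density PQ).
  - move=> x _; rewrite funenegE /L ge_max -EFinN !lee_fin expR_ge0 andbT sub0r.
    by apply: le_trans (expR_ge1Dx _); rewrite lerDr.
rewrite integralE -(fineK neg_fin) -EFinN adde_eq_ninfty orbF.
rewrite gt_eqF // (lt_le_trans (ltNyr 0%R)) //.
by apply: integral_ge0 => x _; exact: funepos_ge0.
Qed.

Lemma integrable_ln_RN_density : KL P Q \is a fin_num ->
  P.-integrable setT (fun x => (ln (RN_density P Q x))%:E).
Proof.
move=> KLfin; have /fin_numP[_ /KL_abs_continuous PQ] := KLfin.
have mL : measurable_fun setT (fun x => (ln (RN_density P Q x))%:E).
  apply/measurable_EFinP; exact: measurableT_comp (measurable_RN_density PQ).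
apply/integrableP; split => //; apply/(abse_integralP P measurableT mL).
by rewrite -KLE // -fin_num_abs.
Qed.

End KL_divergence.

Lemma le_add_ln_of_forall_pos (R : realType) (H K Y Z : R) : 0 <= Y -> Y <= Z ->
  (forall c, 0 < c -> H <= K + Y / c - 1 + ln c) -> H <= K + ln Z.
Proof.
move=> Y0 YZ hc; have [Z0|Z0] := ltP 0 Z.
  apply: le_trans (hc Z Z0) _.
  have : Y / Z <= 1 by rewrite ler_pdivrMr // mul1r.
  lra.
have Y_eq0 : Y = 0 by apply/eqP; rewrite eq_le Y0 (le_trans YZ Z0).
have := hc (expR (H - K)) (expR_gt0 _); rewrite Y_eq0 expRK mul0r; lra.
Qed.

Section donsker_varadhan.
Local Open Scope ereal_scope.
Context {d} {T : measurableType d} {R : realType} {P Q : probability T R}.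
Hypothesis KL_fin : KL P Q \is a fin_num.

Let PQ : P `<< Q.
Proof. by have /fin_numP[_ /KL_abs_continuous] := KL_fin. Qed.

Let lnRN x := ln (RN_density P Q x).

Let mlnRN : measurable_fun setT lnRN.
Proof. exact: measurableT_comp (measurable_RN_density PQ). Qed.

Let ilnRN : P.-integrable setT (EFin \o lnRN).
Proof. exact: integrable_ln_RN_density. Qed.

Lemma integrable_expR_sub_ln_RN_density (h : T -> R) : measurable_fun setT h ->
  \int[Q]_x (expR (h x))%:E < +oo ->
  P.-integrable setT (fun x => (expR (h x - ln (RN_density P Q x)))%:E).
Proof.
move=> mh hfin; apply/integrableP; split.
  by apply/measurable_EFinP; apply: measurableT_comp => //; exact: measurable_funB.
under eq_integral do rewrite gee0_abs ?lee_fin ?expR_ge0 //.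
exact: le_lt_trans (integral_expR_sub_ln_RN_density PQ _ mh) hfin.
Qed.

Lemma integrable_of_ge_integrable (h g : T -> R) : measurable_fun setT h ->
  P.-integrable setT (EFin \o g) -> (forall x, g x <= h x)%R ->
  \int[Q]_x (expR (h x))%:E < +oo -> P.-integrable setT (EFin \o h).
Proof.
move=> mh ig gh hfin.
pose u x := (lnRN x + expR (h x - lnRN x) - 1)%R.
have hu x : (h x <= u x)%R by have := expR_ge1Dx (h x - lnRN x); rewrite /u; lra.
have iu : P.-integrable setT (EFin \o u).
  have ie := integrable_expR_sub_ln_RN_density _ mh hfin.
  apply: eq_integrable (integrableB measurableT (integrableD measurableT ilnRN ie)
    (finite_measure_integrable_cst P 1%R measurableT)) => //.
apply: le_integrable (integrableD _ (integrable_abse ig) (integrable_abse iu)) => //.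
  exact/measurable_EFinP.
move=> x _ /=; rewrite lee_fin (ger0_norm (addr_ge0 _ _)) // ler_norml.
have := gh x; have := hu x; have := ler_norm (u x); have := ler_norm (- g x).
have := normr_ge0 (u x); have := normr_ge0 (g x).
rewrite normrN => *; apply/andP; split; lra.
Qed.

Lemma donsker_varadhan (h : T -> R) (z : R) :
  P.-integrable setT (EFin \o h) -> \int[Q]_x (expR (h x))%:E <= z%:E ->
  \int[P]_x (h x)%:E <= KL P Q + (ln z)%:E.
Proof.
move=> ih hz.
have mh : measurable_fun setT h by exact/measurable_EFinP/(measurable_int P).
pose y x := expR (h x - lnRN x).
have iy : P.-integrable setT (EFin \o y).
  apply: integrable_expR_sub_ln_RN_density => //; exact: le_lt_trans hz (ltry z).
have intL : (\int[P]_x lnRN x = fine (KL P Q))%R by rewrite KLE.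
rewrite -(fineK KL_fin) -(fineK (integrable_fin_num measurableT ih)) -EFinD lee_fin.
apply: (le_add_ln_of_forall_pos _ _ _ (\int[P]_x y x)%R).
- by apply: Rintegral_ge0 => x _; exact: expR_ge0.
- rewrite -lee_fin fineK ?(integrable_fin_num measurableT iy) //.
  exact: le_trans (integral_expR_sub_ln_RN_density PQ _ mh) hz.
move=> c c0.
have hB x : (h x <= lnRN x + y x / c + (ln c - 1))%R.
  by have := expR_ge1Dx (h x - lnRN x - ln c); rewrite expRB lnK ?posrE // /y; lra.
have iyc : P.-integrable setT (EFin \o (fun x => y x / c)%R).
  exact: eq_integrable (integrableZr measurableT c^-1 iy).
have iLy : P.-integrable setT (EFin \o (fun x => lnRN x + y x / c)%R).
  exact: eq_integrable (integrableD measurableT ilnRN iyc).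
have ic := finite_measure_integrable_cst P (ln c - 1)%R measurableT.
have iB : P.-integrable setT (EFin \o (fun x => lnRN x + y x / c + (ln c - 1))%R).
  exact: eq_integrable (integrableD measurableT iLy ic).
have := le_Rintegral measurableT ih iB (fun x _ => hB x).
rewrite (RintegralD measurableT iLy ic) (RintegralD measurableT ilnRN iyc).
rewrite (RintegralZr _ measurableT iy) Rintegral_cst // intL.
rewrite (_ : fine (P setT) = 1%R) ?probability_setT // /Rintegral; lra.
Qed.

End donsker_varadhan.

Section donsker_varadhan_prod.
Local Open Scope ereal_scope.
Context {dW dZ} {TW : measurableType dW} {TZ : measurableType dZ} {R : realType}.
Context {PW : probability TW R} {nu mu mu' : probability TZ R}.
Hypotheses (nu_mu : nu = mu :> (set TZ -> \bar R)) (mu_mu' : mu `<< mu').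

Let lnRN_mu (p : TW * TZ) := ln (RN_density mu mu' p.2).

Let mlnRN_mu : measurable_fun setT lnRN_mu.
Proof.
exact: measurableT_comp (measurableT_comp (@measurable_ln R)
  (measurable_RN_density mu_mu')) measurable_snd.
Qed.

Lemma integral_prod_expR_sub_ln_RN_density (g : TW * TZ -> R) :
  measurable_fun setT g ->
  \int[PW \x nu]_p (expR (g p - ln (RN_density mu mu' p.2)))%:E <=
  \int[PW \x mu']_p (expR (g p))%:E.
Proof.
move=> mg.
have mexp (f : TW * TZ -> R) : measurable_fun setT f ->
    measurable_fun setT (fun p => (expR (f p))%:E).
  by move=> mf; apply/measurable_EFinP; exact: measurableT_comp.
have exp_ge0 (f : TW * TZ -> R) p : 0 <= (expR (f p))%:E by rewrite lee_fin expR_ge0.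
have mgL := mexp _ (measurable_funB mg mlnRN_mu).
have mge := mexp _ mg.
rewrite (fubini_tonelli1 _ mgL (exp_ge0 _)) (fubini_tonelli1 _ mge (exp_ge0 _)).
apply: ge0_le_integral => //.
- by move=> w _; exact: integral_ge0.
- exact: measurable_fun_fubini_tonelli_F.
- exact: measurable_fun_fubini_tonelli_F.
move=> w _; rewrite /fubini_F /= (eq_measure_integral mu) => [|A _ _]; last first.
  exact: (congr1 (fun m => m A) nu_mu).
apply: integral_expR_sub_ln_RN_density mu_mu' _ _.
exact: measurableT_comp mg (pair1_measurable w).
Qed.

Context {P1 : probability (TW * TZ)%type R}.
Hypothesis P1_snd : pushforward P1 snd = mu :> (set TZ -> \bar R).
Hypotheses (KL1_fin : KL P1 (PW \x nu) \is a fin_num)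
  (KL2_fin : KL mu mu' \is a fin_num).

Let ilnRN_mu : P1.-integrable setT (EFin \o lnRN_mu).
Proof.
apply/integrableP; split; first exact/measurable_EFinP.
have /integrableP[_] := integrable_ln_RN_density KL2_fin.
rewrite -P1_snd ge0_integral_pushforward //.
apply: measurableT_comp => //; apply/measurable_EFinP.
exact: measurableT_comp (measurable_RN_density mu_mu').
Qed.

Let integral_lnRN_mu : \int[P1]_p (lnRN_mu p)%:E = KL mu mu'.
Proof.
rewrite KLE // -P1_snd integral_pushforward //.
apply/measurable_EFinP; exact: measurableT_comp (measurable_RN_density mu_mu').
Qed.

Lemma integrable_prod_of_ge (h : TW * TZ -> R) (k : R) : measurable_fun setT h ->
  (forall p, k <= h p)%R -> \int[PW \x mu']_p (expR (h p))%:E < +oo ->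
  P1.-integrable setT (EFin \o h).
Proof.
move=> mh hk hfin.
have ih_sub : P1.-integrable setT (EFin \o (fun p => h p - lnRN_mu p)%R).
  apply: (integrable_of_ge_integrable KL1_fin _ (fun p => k - lnRN_mu p)%R).
  - exact: measurable_funB.
  - exact: eq_integrable (integrableB measurableT
      (finite_measure_integrable_cst P1 k measurableT) ilnRN_mu).
  - by move=> p; rewrite lerD2r.
  - exact: le_lt_trans (integral_prod_expR_sub_ln_RN_density _ mh) hfin.
apply: eq_integrable (integrableD measurableT ih_sub ilnRN_mu) => // p _.
by rewrite /= -EFinD subrK.
Qed.

Lemma donsker_varadhan_prod (h : TW * TZ -> R) (z : R) :
  P1.-integrable setT (EFin \o h) -> \int[PW \x mu']_p (expR (h p))%:E <= z%:E ->
  \int[P1]_p (h p)%:E <= KL P1 (PW \x nu) + KL mu mu' + (ln z)%:E.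
Proof.
move=> ih hz.
have ih_sub : P1.-integrable setT (EFin \o (fun p => h p - lnRN_mu p)%R).
  exact: eq_integrable (integrableB measurableT ih ilnRN_mu).
have mh : measurable_fun setT h by apply/measurable_EFinP; exact: measurable_int ih.
have := donsker_varadhan KL1_fin _ _ ih_sub
  (le_trans (integral_prod_expR_sub_ln_RN_density _ mh) hz).
under eq_integral do rewrite EFinB.
by rewrite integralB_EFin // integral_lnRN_mu leeBlDr // addeAC.
Qed.

End donsker_varadhan_prod.

Lemma psi_star_inv_minusE (R : realType) (psi : R -> R) bm x :
  psi_star_inv_minus psi bm x = psi_star_inv_plus (fun lam => psi (- lam)) (- bm) x.
Proof. by []. Qed.

Section psi_star_inv_plus.
Local Open Scope ereal_scope.
Context {R : realType} (psi : R -> R).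

Lemma psi_star_inv_plus_ge (bp v : R) x :
  (forall lam, (0 < lam < bp)%R -> (lam * v)%:E <= x + (psi lam)%:E) ->
  v%:E <= psi_star_inv_plus psi bp x.
Proof.
move=> H; apply: le_ereal_inf_tmp => _ [lam /= /andP[l0 l1] <-].
by rewrite lee_pdivlMr // -EFinM mulrC; apply: H; apply/andP.
Qed.

Lemma psi_star_inv_plus_pinfty bp : psi_star_inv_plus psi bp +oo = +oo.
Proof.
apply/ereal_inf_pinfty => _ [lam /= /andP[l0 _] <-].
by rewrite addye // gt0_mulye // lte_fin invr_gt0.
Qed.

End psi_star_inv_plus.

Section generalization_gap.
Local Open Scope ereal_scope.
Context {R : realType} {dO dW dZ : measure_display} {Omega : measurableType dO}
  {TW : measurableType dW} {TZ : measurableType dZ}.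
Variables (P : probability Omega R) (n : nat) (mu mu' : probability TZ R)
  (Z : 'I_n -> {mfun Omega >-> TZ}) (W : {mfun Omega >-> TW})
  (loss : TW -> TZ -> R) (bm bp : R) (psi : R -> R).
Hypotheses (mu_ll : mu `<< mu')
  (Z_law : forall i, distribution P (Z i) = mu :> (set TZ -> \bar R))
  (loss_ge0 : forall w z, (0 <= loss w z)%R)
  (loss_meas : measurable_fun [set: (TW * TZ)%type] (fun p => loss p.1 p.2))
  (bm_lt0 : (bm < 0)%R) (bp_gt0 : (0 < bp)%R) (n_gt0 : (0 < n)%N)
  (loss_int : (distribution P W \x mu')%E.-integrable [set: (TW * TZ)%type]
     (fun p => (loss p.1 p.2)%:E)).
Hypothesis cgf_bound : forall lam, (bm < lam < bp)%R ->
  let Q := (distribution P W \x mu')%E in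
  let m := fine (\int[Q]_p (loss p.1 p.2)%:E)%E in
  (\int[Q]_p (expR (lam * (loss p.1 p.2 - m)))%:E < +oo)%E /\
  (ln (fine (\int[Q]_p (expR (lam * (loss p.1 p.2 - m)))%:E)%E) <= psi lam)%R.

Let m := fine (\int[distribution P W \x mu']_p (loss p.1 p.2)%:E).
Let P_ i := distribution P (pairRV W (Z i)).
Let A i := \int[P]_om (loss (W om) (Z i om))%:E.
Let I i := mutual_info P W (Z i) + KL mu mu'.

Let mloss : measurable_fun setT (fun p : TW * TZ => (loss p.1 p.2)%:E).
Proof. exact/measurable_EFinP. Qed.

Let integral_loss_pair i : \int[P_ i]_p (loss p.1 p.2)%:E = A i.
Proof.
by rewrite ge0_integral_distribution // => p; rewrite lee_fin.
Qed.

Let I_neqNy i : I i != -oo.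
Proof. by rewrite adde_eq_ninfty negb_or !KL_neqNy. Qed.

Let I_not_fin i : I i \isn't a fin_num -> I i = +oo.
Proof. by rewrite fin_numE I_neqNy /= negbK => /eqP. Qed.

Let P_snd i : pushforward (P_ i) snd = mu :> (set TZ -> \bar R).
Proof. by rewrite -(Z_law i). Qed.

Let integrable_loss_pair i : I i \is a fin_num ->
  (P_ i).-integrable setT (fun p => (loss p.1 p.2)%:E).
Proof.
rewrite fin_numD => /andP[KL1_fin KL2_fin].
pose t := (bp / 2)%R.
have t_gt0 : (0 < t)%R by rewrite divr_gt0.
have t_range : (bm < t < bp)%R.
  by rewrite (lt_trans bm_lt0 t_gt0) ltr_pdivrMr // ltr_pMr // ltr1n.
have [cgf_fin _] := cgf_bound _ t_range.
pose h p := (t * (loss p.1 p.2 - m))%R.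
have ih : (P_ i).-integrable setT (EFin \o h).
  apply: (integrable_prod_of_ge (Z_law i) mu_ll (P_snd i) KL1_fin KL2_fin _ (- (t * m))%R) => //.
  - apply: measurable_funM => //; exact: measurable_funB.
  - by move=> p; have := mulr_ge0 (ltW t_gt0) (loss_ge0 p.1 p.2); rewrite /h; lra.
apply: eq_integrable (integrableD measurableT (integrableZl measurableT t^-1 ih)
  (finite_measure_integrable_cst _ m measurableT)) => // p _.
by rewrite /= /h -!EFinM -EFinD mulKf ?gt_eqF // subrK.
Qed.

Let I_eqy_of_A_eqy i : A i = +oo -> I i = +oo.
Proof.
move=> Ai; have [Ifin|/I_not_fin//] := boolP (I i \is a fin_num).
have := integrable_fin_num measurableT (integrable_loss_pair i Ifin).
by rewrite integral_loss_pair Ai.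
Qed.

Let scaled_gap_le i t : (bm < t < bp)%R ->
  t%:E * (A i - m%:E) <= I i + (psi t)%:E.
Proof.
move=> t_range.
have [Ifin|/I_not_fin->] := boolP (I i \is a fin_num); last by rewrite addye // leey.
have iloss := integrable_loss_pair i Ifin.
move: Ifin; rewrite fin_numD => /andP[KL1_fin KL2_fin].
have [cgf_fin cgf_le] := cgf_bound _ t_range.
have icst := finite_measure_integrable_cst (P_ i) m measurableT.
have ilm : (P_ i).-integrable setT (EFin \o (fun p => loss p.1 p.2 - m)%R).
  exact: eq_integrable (integrableB measurableT iloss icst).
pose h p := (t * (loss p.1 p.2 - m))%R.
have ih : (P_ i).-integrable setT (EFin \o h).
  exact: eq_integrable (integrableZl measurableT t ilm).
have -> : t%:E * (A i - m%:E) = \int[P_ i]_p (h p)%:E.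
  rewrite -(fineK (integrable_fin_num measurableT ih)) -integral_loss_pair.
  rewrite -(fineK (integrable_fin_num measurableT iloss)) -EFinB -EFinM.
  rewrite [X in _ = X%:E](RintegralZl _ measurableT ilm) (RintegralB measurableT iloss icst).
  by rewrite Rintegral_cst // (_ : fine (P_ i setT) = 1%R) ?mulr1 // /P_ probability_setT.
apply: le_trans (donsker_varadhan_prod (Z_law i) mu_ll (P_snd i) KL1_fin KL2_fin _
  (fine (\int[distribution P W \x mu']_p (expR (h p))%:E)) ih _) _.
  by rewrite fineK // ge0_fin_numE // integral_ge0 // => p _; rewrite lee_fin expR_ge0.
by apply: leeD; rewrite ?lee_fin.
Qed.

Let A_fin_or_eqy i : A i \is a fin_num \/ A i = +oo.
Proof.
have A_ge0 : 0 <= A i by apply: integral_ge0 => om _; rewrite lee_fin.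
by rewrite ge0_fin_numE // ltey; case: (A i =P +oo); [right|left].
Qed.

Let gap_le_psi_star_inv_minus i : (m - fine (A i))%:E <= psi_star_inv_minus psi bm (I i).
Proof.
rewrite psi_star_inv_minusE.
have [Afin|/I_eqy_of_A_eqy->] := A_fin_or_eqy i; last by rewrite psi_star_inv_plus_pinfty leey.
apply: psi_star_inv_plus_ge => lam /andP[lam_gt0 lam_lt].
have t_range : (bm < - lam < bp)%R.
  by rewrite ltrNr lam_lt (lt_trans _ bp_gt0) // oppr_lt0.
have := scaled_gap_le i _ t_range.
by rewrite -(fineK Afin) -EFinB -EFinM mulNr -mulrN opprB.
Qed.

Let gap_le_psi_star_inv_plus i : (fine (A i) - m)%:E <= psi_star_inv_plus psi bp (I i).
Proof.
have [Afin|/I_eqy_of_A_eqy->] := A_fin_or_eqy i; last by rewrite psi_star_inv_plus_pinfty leey.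
apply: psi_star_inv_plus_ge => lam /andP[lam_gt0 lam_lt].
have t_range : (bm < lam < bp)%R by rewrite lam_lt (lt_trans bm_lt0).
by have := scaled_gap_le i _ t_range; rewrite -(fineK Afin) -EFinB -EFinM.
Qed.

Let L_mu' w := \int[mu']_z (loss w z)%:E.

Let integral_L_mu' : \int[P]_om L_mu' (W om) = m%:E.
Proof.
have loss0 (p : TW * TZ) : 0 <= (loss p.1 p.2)%:E by rewrite lee_fin.
transitivity (\int[distribution P W]_w L_mu' w).
  rewrite ge0_integral_distribution //.
  - exact: (measurable_fun_fubini_tonelli_F (m2 := mu') _ mloss loss0).
  - by move=> w; apply: integral_ge0 => z _; rewrite lee_fin.
transitivity (\int[distribution P W \x mu']_p (loss p.1 p.2)%:E).
  exact/esym/(fubini_tonelli1 _ mloss loss0).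
by rewrite fineK // integrable_fin_num.
Qed.

Let integrable_L_mu' : P.-integrable setT (fun om => L_mu' (W om)).
Proof.
apply/integrableP; split.
  apply: measurableT_comp (measurable_funPT W).
  by apply: (measurable_fun_fubini_tonelli_F (m2 := mu') _ mloss) => p; rewrite lee_fin.
rewrite (eq_integral (fun om => L_mu' (W om))) ?integral_L_mu' ?ltry // => om _.
by rewrite gee0_abs // integral_ge0 // => z _; rewrite lee_fin.
Qed.

Let integrable_loss i : A i \is a fin_num ->
  P.-integrable setT (fun om => (loss (W om) (Z i om))%:E).
Proof.
move=> Afin; apply/integrableP; split.
  apply/measurable_EFinP.
  exact: measurableT_comp loss_meas (measurable_funPT (pairRV W (Z i))).
under eq_integral do rewrite abse_EFin ger0_norm //.
by rewrite -ge0_fin_numE // integral_ge0 // => om _; rewrite lee_fin.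
Qed.

Let expected_gap_eq : (forall i, A i \is a fin_num) ->
  \int[P]_om (L_mu' (W om) - (n%:R^-1 * \sum_(i < n) loss (W om) (Z i om))%:E) =
  (n%:R^-1 * \sum_(i < n) (m - fine (A i)))%:E.
Proof.
move=> Afin.
have iS : P.-integrable setT (fun om => \sum_(i < n) (loss (W om) (Z i om))%:E).
  by apply: integrable_sum => // i _; exact: integrable_loss.
have iL : P.-integrable setT
    (fun om => (n%:R^-1 * \sum_(i < n) loss (W om) (Z i om))%:E).
  apply: eq_integrable (integrableZl measurableT n%:R^-1 iS) => // om _.
  by rewrite EFinM sumEFin.
rewrite (integralB measurableT integrable_L_mu' iL) integral_L_mu'.
under eq_integral do rewrite EFinM -sumEFin.
rewrite integralZl // integral_sum //; last by move=> i; exact: integrable_loss.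
rewrite (eq_bigr (fun i => (fine (A i))%:E)) => [|i _]; last by rewrite fineK.
rewrite sumEFin -EFinM -EFinB; congr EFin.
rewrite sumrB sumr_const card_ord -mulr_natr; field.
by rewrite pnatr_eq0 -lt0n.
Qed.

Lemma generalization_gap_bounds :
  let L_mu' := fun w => (\int[mu']_z (loss w z)%:E)%E in
  let L_hat := fun w (om : Omega) => (n%:R^-1 * \sum_(i < n) loss w (Z i om))%R in
  let gen := (\int[P]_om (L_mu' (W om) - (L_hat (W om) om)%:E))%E in
  (gen <= (n%:R^-1)%:E * \sum_(i < n)
            psi_star_inv_minus psi bm (mutual_info P W (Z i) + KL mu mu'))%E /\
  (- gen <= (n%:R^-1)%:E * \sum_(i < n)
            psi_star_inv_plus psi bp (mutual_info P W (Z i) + KL mu mu'))%E.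
Proof.
move=> ? ? gen; have n_inv_gt0 : (0 < n%:R^-1 :> R)%R by rewrite invr_gt0 ltr0n.
have [[j Aj]|Anot] := pselect (exists j, A j = +oo).
  have sum_eqy (b : 'I_n -> \bar R) (r : 'I_n -> R) :
      (forall i, (r i)%:E <= b i) -> b j = +oo -> \sum_(i < n) b i = +oo.
    move=> rb bj; apply/esum_eqyP => [i _|]; last by exists j; rewrite mem_index_enum.
    by rewrite gt_eqF // (lt_le_trans (ltNyr _) (rb i)).
  rewrite (sum_eqy _ _ gap_le_psi_star_inv_minus); last first.
    by rewrite (I_eqy_of_A_eqy j Aj) psi_star_inv_minusE psi_star_inv_plus_pinfty.
  rewrite (sum_eqy _ _ gap_le_psi_star_inv_plus); last first.
    by rewrite (I_eqy_of_A_eqy j Aj) psi_star_inv_plus_pinfty.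
  by rewrite gt0_muley ?lte_fin // !leey.
have Afin i : A i \is a fin_num.
  by have [//|Ai] := A_fin_or_eqy i; exfalso; apply: Anot; exists i.
rewrite /gen expected_gap_eq //; split.
  rewrite EFinM -sumEFin; apply: lee_wpmul2l; first by rewrite lee_fin ltW.
  by apply: lee_sum => i _; exact: gap_le_psi_star_inv_minus.
rewrite -EFinN -mulrN -sumrN EFinM -sumEFin; apply: lee_wpmul2l.
  by rewrite lee_fin ltW.
by apply: lee_sum => i _; rewrite opprB; exact: gap_le_psi_star_inv_plus.
Qed.

End generalization_gap.

Theorem corollary1 (R : realType)
  (dO dW dZ : measure_display) (Omega : measurableType dO)
  (TW : measurableType dW) (TZ : measurableType dZ)
  (P : probability Omega R)
  (n : nat) (n_gt0 : (0 < n)%N)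
  (mu mu' : probability TZ R) (mu_ll : mu `<< mu')
  (Z : 'I_n -> {mfun Omega >-> TZ})
  (Z_law : forall i, distribution P (Z i) = mu :> (set TZ -> \bar R))
  (Z_indep : mutually_independent P Z)
  (W : {mfun Omega >-> TW})
  (loss : TW -> TZ -> R)
  (loss_ge0 : forall w z, 0 <= loss w z)
  (loss_meas : measurable_fun [set: (TW * TZ)%type] (fun p => loss p.1 p.2))
  (bm bp : R) (bm_lt0 : bm < 0) (bp_gt0 : 0 < bp) (psi : R -> R)
  (loss_int : (distribution P W \x mu')%E.-integrable [set: (TW * TZ)%type]
                (fun p => (loss p.1 p.2)%:E))
  (cgf_bound : forall lam, bm < lam < bp ->
     let Q := (distribution P W \x mu')%E in
     let m := fine (\int[Q]_p (loss p.1 p.2)%:E)%E in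
     (\int[Q]_p (expR (lam * (loss p.1 p.2 - m)))%:E < +oo)%E /\
     ln (fine (\int[Q]_p (expR (lam * (loss p.1 p.2 - m)))%:E)%E) <= psi lam) :
  let L_mu' := fun w => (\int[mu']_z (loss w z)%:E)%E in
  let L_hat := fun w (om : Omega) => n%:R^-1 * \sum_(i < n) loss w (Z i om) in
  let gen := (\int[P]_om (L_mu' (W om) - (L_hat (W om) om)%:E))%E in
  (gen <= (n%:R^-1)%:E * \sum_(i < n)
            psi_star_inv_minus psi bm (mutual_info P W (Z i) + KL mu mu'))%E /\
  (- gen <= (n%:R^-1)%:E * \sum_(i < n)
            psi_star_inv_plus psi bp (mutual_info P W (Z i) + KL mu mu'))%E.
Proof.
exact: generalization_gap_bounds.
Qed.
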